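(* Every derivable sequent $\Gamma\vdash A$ of the sequent calculus has exactly one focused derivation.
   Context: Formulas are built from atoms ($p,q,\dots$) by a binary product: every formula is an atom or $A\bullet B$. A context is a finite (possibly empty) list of formulas; commas denote concatenation. The sequent calculus has exactly four rules (no weakening, contraction or exchange): ($\bullet L$) from $A,B,\Delta\vdash C$ infer $A\bullet B,\Delta\vdash C$ (the product must be the leftmost formula); ($\bullet R$) from $\Gamma\vdash A$ and $\Delta\vdash B$ infer $\Gamma,\Delta\vdash A\bullet B$; ($id$) $A\vdash A$; ($cut$) from $\Theta\vdash A$ and $\Gamma,A,\Delta\vdash B$ infer $\Gamma,\Theta,\Delta\vdash B$. A derivation is a finite rooted tree whose nodes are labelled by rule instances and whose edges are labelled by sequents; a sequent is derivable if it is the conclusion of a derivation with no undischarged premises. A context is irreducible if its leftmost formula is not a product (it is empty or begins with an atom). A focused derivation is a derivation (with no undischarged premises) using only: ($\bullet L$); ($\bullet R^{foc}$): from $\Gamma\vdash A$ and $\Delta\vdash B$ infer $\Gamma,\Delta\vdash A\bullet B$, where $\Gamma$ is irreducible; and ($id^{atm}$): $p\vdash p$ for atoms $p$. *)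

(* Non-commutative, non-unital Lambek-style product calculus. *)
From Stdlib Require Import List.
Import ListNotations.

Inductive fma : Type :=
| At : nat -> fma
| Prod : fma -> fma -> fma.

(** Derivations of the full calculus (with cut), as proof-relevant trees:
    a term of type [deriv G A] is a derivation of the sequent G ⊢ A.
    Contexts are lists; commas are concatenation [++]. *)
Inductive deriv : list fma -> fma -> Type :=
| d_prodL : forall (A B : fma) (D : list fma) (C : fma),
    deriv (A :: B :: D) C -> deriv (Prod A B :: D) C
| d_prodR : forall (G D : list fma) (A B : fma),
    deriv G A -> deriv D B -> deriv (G ++ D) (Prod A B)
| d_id : forall A : fma, deriv [A] A
| d_cut : forall (Th G D : list fma) (A B : fma),
    deriv Th A -> deriv (G ++ A :: D) B -> deriv (G ++ Th ++ D) B.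

Definition derivable (G : list fma) (A : fma) : Prop := inhabited (deriv G A).

(** A context is irreducible if it is empty or its leftmost formula is an atom
    (boolean version, so that the side condition carries no proof content). *)
Definition irreducible (G : list fma) : bool :=
  match G with
  | Prod _ _ :: _ => false
  | _ => true
  end.

Inductive foc : list fma -> fma -> Type :=
| f_prodL : forall (A B : fma) (D : list fma) (C : fma),
    foc (A :: B :: D) C -> foc (Prod A B :: D) C
| f_prodR : forall (G D : list fma) (A B : fma),
    irreducible G = true -> foc G A -> foc D B -> foc (G ++ D) (Prod A B)
| f_id : forall p : nat, foc [At p] (At p).

(* Existence: the focused rules admit identity, the unrestricted right rule and
   cut, so every derivation can be replayed with focused rules.  Cut is removed
   by induction on the cut formula and then on the right derivation; a cut on
   A • B against a left rule is pushed up the left derivation until that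
   derivation ends with a right rule, where it splits into cuts on A and B.

   Uniqueness: the last rule of a focused derivation is determined by the
   sequent, since a product in first position excludes the focused right rule,
   whose left premise has a nonempty irreducible context.  In a right rule the
   split of the context is forced too: the atoms of the left part, read from
   left to right, must be those of the left factor. *)

From Stdlib Require Import List Program.Equality Eqdep_dec.
Import ListNotations.

Lemma foc_ctx_nonempty G A : foc G A -> G <> [].
Proof.
  induction 1; try discriminate.
  destruct G; [congruence | discriminate].
Qed.

Lemma foc_prodR G D A B :
  foc G A -> foc D B -> inhabited (foc (G ++ D) (Prod A B)).
Proof.
  intros dA dB; induction dA as [A1 A2 G C dA [d] | G1 G2 A1 A2 irr dA1 _ dA2 _ | p].
  - constructor; apply f_prodL; exact d.
  - constructor; apply f_prodR; [| apply f_prodR | ]; auto.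
    destruct G1; [now destruct (foc_ctx_nonempty _ _ dA1) | exact irr].
  - constructor; apply (f_prodR [At p]); auto using f_id.
Qed.

Lemma foc_id A : inhabited (foc [A] A).
Proof.
  induction A as [p | A [dA] B [dB]].
  - constructor; apply f_id.
  - destruct (foc_prodR _ _ _ _ dA dB) as [d].
    constructor; apply f_prodL; exact d.
Qed.

Definition cut_admissible (A : fma) : Prop :=
  forall Th G D C, foc Th A -> foc (G ++ A :: D) C -> inhabited (foc (G ++ Th ++ D) C).

Lemma foc_cut_prodL A B :
  cut_admissible A -> cut_admissible B ->
  forall Th D C, foc Th (Prod A B) -> foc (A :: B :: D) C -> inhabited (foc (Th ++ D) C).
Proof.
  intros cutA cutB Th D C dAB.
  remember (Prod A B) as AB eqn:E; revert D C.
  induction dAB as [X Y Th' E' d IH | G1 G2 A1 B1 _ dA _ dB _ | p];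
    intros D C dC; try discriminate.
  - destruct (IH E D C dC) as [d']; constructor; apply f_prodL; exact d'.
  - injection E as -> ->.
    destruct (cutA _ [] (B :: D) _ dA dC) as [d].
    destruct (cutB _ G1 D _ dB d) as [d'].
    rewrite <- app_assoc; constructor; exact d'.
Qed.

Lemma cut_admissible_of_principal A :
  (forall A1 A2 Th D C, A = Prod A1 A2 ->
     foc Th A -> foc (A1 :: A2 :: D) C -> inhabited (foc (Th ++ D) C)) ->
  cut_admissible A.
Proof.
  intros principal Th G D C dA dC.
  remember (G ++ A :: D) as L eqn:EL; revert G D EL.
  induction dC as [X Y L C dC IH | G1 G2 X Y irr dX IHX dY IHY | p];
    intros G D EL.
  - destruct G as [| F G]; injection EL as <- EL; subst L.
    + exact (principal X Y Th D C eq_refl dA dC).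
    + destruct (IH (X :: Y :: G) D eq_refl) as [d].
      constructor; apply f_prodL; exact d.
  - destruct (app_eq_app _ _ _ _ EL) as [l [[-> ED] | [-> EG2]]].
    + destruct l as [| F l].
      * simpl in ED; subst G2; rewrite app_nil_r in *.
        destruct (IHY [] D eq_refl) as [d].
        constructor; apply f_prodR; auto.
      * injection ED as <- ->.
        destruct (IHX G l eq_refl) as [d].
        destruct (foc_prodR _ _ _ _ d dY) as [d'].
        rewrite <- !app_assoc in d'; simpl in d'.
        constructor; exact d'.
    + destruct (IHY l D EG2) as [d].
      rewrite <- app_assoc; constructor; apply f_prodR; auto.
  - destruct G as [| F [| F' G]]; injection EL as <- EL; try discriminate.
    subst D; rewrite app_nil_r; constructor; exact dA.
Qed.

Lemma foc_cut A : cut_admissible A.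
Proof.
  induction A as [p | A IHA B IHB]; apply cut_admissible_of_principal;
    intros A1 A2 Th D C E; [discriminate |].
  injection E as <- <-; apply foc_cut_prodL; auto.
Qed.

Lemma deriv_foc G A : deriv G A -> inhabited (foc G A).
Proof.
  induction 1 as [A B D C _ [d] | G D A B _ [dA] _ [dB] | A | Th G D A B _ [dA] _ [dB]].
  - constructor; apply f_prodL; exact d.
  - exact (foc_prodR _ _ _ _ dA dB).
  - apply foc_id.
  - exact (foc_cut _ _ _ _ _ dA dB).
Qed.

Fixpoint atoms (A : fma) : list nat :=
  match A with
  | At p => [p]
  | Prod A B => atoms A ++ atoms B
  end.

Definition ctx_atoms (G : list fma) : list nat := flat_map atoms G.

Lemma atoms_nonempty A : atoms A <> [].
Proof.
  induction A as [p | A IHA B _]; simpl; try discriminate.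
  destruct (atoms A); [congruence | discriminate].
Qed.

Lemma foc_atoms G A : foc G A -> ctx_atoms G = atoms A.
Proof.
  unfold ctx_atoms; induction 1 as [A B D C _ IH | G D A B _ _ IHA _ IHB | p]; simpl in *.
  - rewrite <- app_assoc; exact IH.
  - rewrite flat_map_app; congruence.
  - reflexivity.
Qed.

Lemma app_prefix_ctx_atoms G D G' D' :
  G' ++ D' = G ++ D -> ctx_atoms G' = ctx_atoms G -> G' = G.
Proof.
  unfold ctx_atoms; revert G'; induction G as [| F G IH]; intros [| F' G'] E EA;
    simpl in *; auto.
  - destruct (app_eq_nil _ _ EA) as [Hnil _]; now destruct (atoms_nonempty F').
  - destruct (app_eq_nil _ _ (eq_sym EA)) as [Hnil _]; now destruct (atoms_nonempty F).
  - injection E as -> E; f_equal; eauto using app_inv_head.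
Qed.

Lemma irreducible_app_not_prod G D X Y E :
  irreducible G = true -> G <> [] -> G ++ D <> Prod X Y :: E.
Proof. destruct G as [| [p | ] G]; simpl; congruence. Qed.

Lemma foc_unique G A (d d' : foc G A) : d = d'.
Proof.
  induction d as [A B D C d IH | G D A B irr dA IHA dB IHB | p].
  - dependent destruction d'.
    + f_equal; apply IH.
    + exfalso; eapply irreducible_app_not_prod; eauto using foc_ctx_nonempty.
  - dependent destruction d'.
    + exfalso; eapply irreducible_app_not_prod; eauto using foc_ctx_nonempty.
    + assert (G0 = G) as ->
        by (eapply app_prefix_ctx_atoms; eauto;
            now rewrite (foc_atoms _ _ d'1), (foc_atoms _ _ dA)).
      apply app_inv_head in x0 as ->; apply JMeq_eq in x as <-.
      rewrite (UIP_dec Bool.bool_dec irr e); f_equal; auto.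
  - dependent destruction d'; reflexivity.
Qed.

Theorem theorem1p17 :
  forall (G : list fma) (A : fma),
    derivable G A ->
    exists d : foc G A, forall d' : foc G A, d' = d.
Proof.
  intros G A [d]; destruct (deriv_foc _ _ d) as [f].
  exists f; intros d'; apply foc_unique.
Qed.
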